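(* Let $\mu\in(0,1)$ and $\Lambda>0$. For every $x>0$, $$\int_0^\infty\theta_\mu\big(e^{-\Lambda u}\big)e^{-ux}\,du=\frac1\Lambda\,\frac{\pi\sin(\pi\mu)}{\cos\!\big(\pi\sqrt{\mu^2-\tfrac{4x}{\Lambda}}\big)-\cos(\pi\mu)}.$$
   Context: $\theta_\mu(q):=\sum_{n\in\mathbb Z}\big(n+\frac\mu2\big)q^{n(n+\mu)}$ for $|q|<1$. The expression $\cos(\pi\sqrt z)$ denotes the entire function $\sum_{n\ge0}(-\pi^2z)^n/(2n)!$. *)

From Stdlib Require Import Reals.
From Coquelicot Require Import Coquelicot.
Open Scope R_scope.

Definition theta_term (mu q : R) (n : Z) : R :=
  (IZR n + mu / 2) * Rpower q (IZR n * (IZR n + mu)).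

Definition theta (mu q : R) : R :=
  Series (fun n : nat => theta_term mu q (Z.of_nat n))
  + Series (fun n : nat => theta_term mu q (- Z.of_nat (S n))%Z).

(* cos(pi sqrt z) as the entire function sum_{n>=0} (-pi^2 z)^n / (2n)!. *)
Definition cos_pi_sqrt (z : R) : R :=
  Series (fun n : nat => (- (PI ^ 2) * z) ^ n / INR (Factorial.fact (2 * n))).

From Stdlib Require Import Reals Lra Lia Psatz.
From Coquelicot Require Import Coquelicot.
Open Scope R_scope.

(* Pairing the terms of [theta_mu] at [n] and [- n - 1], the integrand is, for [u > 0], the sum
   over [n >= 0] of [(n + b) exp (- alpha_n u) - (n + 1 - b) exp (- beta_n u)], where [b = mu / 2],
   [w = x / Lambda - b^2], [alpha_n = Lambda ((n + b)^2 + w)] and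
   [beta_n = Lambda ((n + 1 - b)^2 + w)]. On every [[a, c]] in [(0, oo)] the series integrates
   termwise, giving the increment of the primitive [P = sum_n P_n]. Uniformly in [u >= 0] the
   [P_n u] are [O (1 / (n + 1)^2)], so by Tannery's theorem [P u -> 0] as [u -> oo] and
   [P u -> P 0] as [u -> 0+]; the integral is [- P 0], i.e. [1 / Lambda] times the series of
   [(n + b) / ((n + b)^2 + w) - (n + 1 - b) / ((n + 1 - b)^2 + w)].

   For [w = e^2 >= 0] this is the partial fraction expansion of
   [f b e = Re (pi cot (pi (b + i e))) = pi sin (2 pi b) / (cosh (2 pi e) - cos (2 pi b))], proved
   by Herglotz' trick: from [f v e = (f (v / 2) (e / 2) + f ((v + 1) / 2) (e / 2)) / 2] we get
   [f b e = 2^-j sum_(k < 2^j) f ((b + k) / 2^j) (e / 2^j)]; pairing [k] with [2^j - 1 - k] through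
   [f (1 - v) e = - f v e], each rescaled pair tends as [j -> oo] to a term of the series, and a
   Lipschitz bound on [f] gives the summable majorant for Tannery's theorem. For [w = - c^2 < 0]
   the summand splits into the cotangent expansions at [b - c] and [b + c]. *)

(** * Partial sums and Tannery's theorem *)

Fixpoint psum (f : nat -> R) (n : nat) : R :=
  match n with O => 0 | S m => psum f m + f m end.

Lemma psum_sum_f_R0 (f : nat -> R) n : psum f (S n) = sum_f_R0 f n.
Proof. induction n as [|n IH]; simpl in *; [ring | rewrite <- IH; simpl; ring]. Qed.

Lemma psum_ext (f g : nat -> R) n :
  (forall k, (k < n)%nat -> f k = g k) -> psum f n = psum g n.
Proof.
  induction n as [|n IH]; simpl; intros H; auto.
  rewrite IH by (intros; apply H; lia). rewrite H by lia. auto.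
Qed.

Lemma psum_plus (f g : nat -> R) n : psum (fun k => f k + g k) n = psum f n + psum g n.
Proof. induction n as [|n IH]; simpl; [ring | rewrite IH; ring]. Qed.

Lemma psum_scal c (f : nat -> R) n : psum (fun k => c * f k) n = c * psum f n.
Proof. induction n as [|n IH]; simpl; [ring | rewrite IH; ring]. Qed.

Lemma psum_const0 n : psum (fun _ => 0) n = 0.
Proof. induction n as [|n IH]; simpl; [ring | rewrite IH; ring]. Qed.

Lemma psum_add (f : nat -> R) m n :
  psum f (m + n) = psum f m + psum (fun k => f (m + k)%nat) n.
Proof.
  induction n as [|n IH]; simpl.
  - rewrite Nat.add_0_r; ring.
  - rewrite Nat.add_succ_r; simpl. rewrite IH; ring.
Qed.

Lemma psum_rev (f : nat -> R) n : psum f n = psum (fun k => f (n - 1 - k)%nat) n.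
Proof.
  induction n as [|n IH]; [reflexivity|].
  change (psum f (S n)) with (psum f n + f n).
  replace (psum (fun k => f (S n - 1 - k)%nat) (S n))
    with (psum (fun k => f (S n - 1 - k)%nat) (1 + n)) by reflexivity.
  rewrite psum_add, IH. simpl psum at 2.
  rewrite (psum_ext (fun k => f (S n - 1 - (1 + k))%nat) (fun k => f (n - 1 - k)%nat)).
  - rewrite !Nat.sub_0_r. ring.
  - intros k _. f_equal. lia.
Qed.

Lemma psum_le_mono (f : nat -> R) m n :
  (forall k, 0 <= f k) -> (m <= n)%nat -> psum f m <= psum f n.
Proof. intros Hf Hmn. induction Hmn as [|n _ IH]; simpl; [lra | pose proof (Hf n); lra]. Qed.

Lemma is_series_psum (f : nat -> R) m :
  is_series (fun k => if (k <? m)%nat then f k else 0) (psum f m).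
Proof.
  apply (filterlim_ext_loc (fun _ => psum f m)); [|apply filterlim_const].
  exists m. intros n Hn. rewrite sum_n_Reals, <- psum_sum_f_R0.
  replace (S n) with (m + (S n - m))%nat by lia. rewrite psum_add.
  rewrite (psum_ext (fun k => if (m + k <? m)%nat then f (m + k)%nat else 0) (fun _ => 0)),
    psum_const0, Rplus_0_r.
  - apply psum_ext. intros k Hk. destruct (Nat.ltb_spec k m); [auto | lia].
  - intros k _. destruct (Nat.ltb_spec (m + k) m); [lia | auto].
Qed.

Lemma Series_psum_split (f : nat -> R) n :
  ex_series f -> Series f = psum f n + Series (fun k => f (n + k)%nat).
Proof.
  intros Hf. destruct n as [|n].
  - simpl. rewrite Rplus_0_l. apply Series_ext. auto.
  - rewrite (Series_incr_n f (S n)) by (lia || auto). rewrite psum_sum_f_R0. reflexivity.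
Qed.

Lemma ball_R_Rabs (x y e : R) : ball x e y <-> Rabs (y - x) < e.
Proof. reflexivity. Qed.

Lemma filterlim_Rabs_lt {T} (F : (T -> Prop) -> Prop) {FF : Filter F} (f : T -> R) l e :
  filterlim f F (locally l) -> 0 < e -> F (fun t => Rabs (f t - l) < e).
Proof. intros Hf He. exact (proj1 (filterlim_locally f l) Hf (mkposreal e He)). Qed.

Lemma filterlim_Rabs_le {T} (F : (T -> Prop) -> Prop) {FF : ProperFilter F} (f : T -> R) l d :
  filterlim f F (locally l) -> (forall t, Rabs (f t) <= d) -> Rabs l <= d.
Proof.
  intros Hf Hd. destruct (Rle_lt_dec (Rabs l) d) as [|Hlt]; auto.
  destruct (filter_ex _ (filterlim_Rabs_lt F f l _ Hf (proj2 (Rlt_0_minus _ _) Hlt))) as [t Ht].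
  pose proof (Rabs_triang_inv l (f t)). rewrite <- Rabs_Ropp, Ropp_minus_distr in Ht.
  pose proof (Hd t). lra.
Qed.

Lemma ex_series_Rabs_le (f D : nat -> R) :
  (forall n, Rabs (f n) <= D n) -> ex_series D -> ex_series f.
Proof. intros HfD HD. apply (ex_series_le f D); auto. Qed.

Lemma Series_tail_small (D : nat -> R) e :
  ex_series D -> 0 < e -> exists N, Rabs (Series D - psum D N) < e.
Proof.
  intros HD He. destruct (filterlim_Rabs_lt _ _ _ e (Series_correct _ HD) He) as [N HN].
  exists (S N). rewrite psum_sum_f_R0, <- sum_n_Reals, Rabs_minus_sym. exact (HN N (le_n _)).
Qed.

Lemma Series_tail_dominated (f D : nat -> R) N :
  (forall n, Rabs (f n) <= D n) -> ex_series D ->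
  Rabs (Series f - psum f N) <= Series D - psum D N.
Proof.
  intros HfD HD.
  assert (Hf : ex_series f) by (apply (ex_series_Rabs_le f D); auto).
  rewrite (Series_psum_split f N Hf), (Series_psum_split D N HD).
  replace (psum f N + _ - psum f N) with (Series (fun k => f (N + k)%nat)) by ring.
  replace (psum D N + _ - psum D N) with (Series (fun k => D (N + k)%nat)) by ring.
  assert (HDN : ex_series (fun k => D (N + k)%nat)) by (apply ex_series_incr_n; auto).
  eapply Rle_trans; [apply Series_Rabs|].
  - apply (ex_series_Rabs_le _ (fun k => D (N + k)%nat)); [|exact HDN].
    intros k. rewrite Rabs_Rabsolu. apply HfD.
  - apply Series_le; [intros k; split; [apply Rabs_pos | apply HfD] | exact HDN].
Qed.

Lemma filterlim_psum {T} (F : (T -> Prop) -> Prop) {FF : Filter F}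
    (f : T -> nat -> R) (l : nat -> R) N :
  (forall n, filterlim (fun t => f t n) F (locally (l n))) ->
  filterlim (fun t => psum (f t) N) F (locally (psum l N)).
Proof.
  intros Hf. induction N as [|N IH]; simpl; [apply filterlim_const|].
  eapply filterlim_comp_2; [exact IH | apply Hf | exact (filterlim_plus (psum l N) (l N))].
Qed.

Lemma filterlim_Series_dominated {T} (F : (T -> Prop) -> Prop) {FF : ProperFilter F}
    (f : T -> nat -> R) (l D : nat -> R) :
  (forall n, filterlim (fun t => f t n) F (locally (l n))) ->
  (forall t n, Rabs (f t n) <= D n) -> ex_series D ->
  filterlim (fun t => Series (f t)) F (locally (Series l)).
Proof.
  intros Hl HfD HD.
  assert (HlD : forall n, Rabs (l n) <= D n)
    by (intros n; exact (filterlim_Rabs_le F (fun t => f t n) _ _ (Hl n) (fun t => HfD t n))).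
  apply filterlim_locally. intros e.
  assert (He3 : 0 < e / 3) by (destruct e; simpl; lra).
  destruct (Series_tail_small D (e / 3) HD He3) as [N HN].
  assert (HDN : Rabs (Series D - psum D N) = Series D - psum D N).
  { apply Rabs_right, Rle_ge. eapply Rle_trans; [apply Rabs_pos|].
    exact (Series_tail_dominated l D N HlD HD). }
  eapply filter_imp; [|exact (filterlim_Rabs_lt F _ _ _ (filterlim_psum F f l N Hl) He3)].
  intros t Ht; cbv beta in Ht. apply ball_R_Rabs.
  pose proof (Series_tail_dominated (f t) D N (HfD t) HD).
  pose proof (Series_tail_dominated l D N HlD HD).
  replace (Series (f t) - Series l)
    with ((Series (f t) - psum (f t) N) + (psum (f t) N - psum l N) - (Series l - psum l N))
    by ring.
  pose proof (Rabs_triang (Series (f t) - psum (f t) N + (psum (f t) N - psum l N))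
                          (- (Series l - psum l N))) as Htri.
  pose proof (Rabs_triang (Series (f t) - psum (f t) N) (psum (f t) N - psum l N)).
  rewrite Rabs_Ropp in Htri. unfold Rminus in *. lra.
Qed.

Lemma is_series_telescope_inv : is_series (fun k => / (INR k + 1) - / (INR k + 2)) 1.
Proof.
  apply (filterlim_ext (fun n => 1 - / (INR n + 2))).
  - intros n. rewrite sum_n_Reals. induction n as [|n IH].
    + simpl. field.
    + rewrite tech5, <- IH. cbv beta. rewrite S_INR. pose proof (pos_INR n). field. lra.
  - change (is_lim_seq (fun n => 1 - / (INR n + 2)) 1).
    replace (Finite 1) with (Finite (1 - 0)) by (f_equal; ring).
    apply is_lim_seq_minus'; [apply is_lim_seq_const|].
    apply (is_lim_seq_inv _ p_infty); [|discriminate].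
    eapply is_lim_seq_plus; [apply is_lim_seq_INR | apply is_lim_seq_const | constructor].
Qed.

Lemma ex_series_inv_sq : ex_series (fun k => / (INR k + 1) ^ 2).
Proof.
  apply (ex_series_Rabs_le _ (fun k => 2 * (/ (INR k + 1) - / (INR k + 2)))).
  - intros k. pose proof (pos_INR k).
    rewrite Rabs_right by (apply Rle_ge, Rlt_le, Rinv_0_lt_compat, pow_lt; lra).
    replace (2 * (/ (INR k + 1) - / (INR k + 2))) with (2 / ((INR k + 1) * (INR k + 2)))
      by (field; lra).
    apply Rle_trans with (2 / ((INR k + 1) * (2 * (INR k + 1)))).
    + right. field. lra.
    + unfold Rdiv. apply Rmult_le_compat_l; [lra|]. apply Rinv_le_contravar; nra.
  - apply (ex_series_scal_l 2 (fun k => / (INR k + 1) - / (INR k + 2))).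
    exists 1. exact is_series_telescope_inv.
Qed.

(* Stated at type [R] so that the pointwise goals are equations in [R], as [ring] needs. *)
Lemma is_series_ext_R (a b : nat -> R) l : (forall n, a n = b n) -> is_series a l -> is_series b l.
Proof. exact (is_series_ext a b l). Qed.

(** * Termwise and improper integrals *)

Lemma is_RInt_psum (f : nat -> R -> R) (I : nat -> R) a c N :
  (forall n, is_RInt (f n) a c (I n)) ->
  is_RInt (fun u => psum (fun n => f n u) N) a c (psum I N).
Proof.
  intros Hf. induction N as [|N IH]; simpl.
  - pose proof (is_RInt_const a c 0) as H0.
    change (scal (c - a) 0) with ((c - a) * 0) in H0. rewrite Rmult_0_r in H0. exact H0.
  - exact (is_RInt_plus _ _ a c _ _ IH (Hf N)).
Qed.

(* The summands are clamped to [[a, c]] to make the convergence uniform on all of [R]. *)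
Lemma is_RInt_Series (f : nat -> R -> R) (I M : nat -> R) a c : a < c ->
  (forall n, is_RInt (f n) a c (I n)) ->
  (forall n u, a <= u <= c -> Rabs (f n u) <= M n) -> ex_series M ->
  is_RInt (fun u => Series (fun n => f n u)) a c (Series I).
Proof.
  intros Hac Hint HfM HM.
  set (clamp := fun u => Rmax a (Rmin c u)).
  assert (Hcl : forall u, a <= clamp u <= c)
    by (intros u; split; [apply Rmax_l | apply Rmax_lub; [lra | apply Rmin_l]]).
  assert (Hcl_id : forall u, a < u < c -> clamp u = u)
    by (intros u Hu; unfold clamp; rewrite Rmin_right, Rmax_right; lra).
  assert (Hint_cl : forall n, is_RInt (fun u => f n (clamp u)) a c (I n)).
  { intros n. apply (is_RInt_ext (f n)); [|apply Hint].
    intros u Hu. rewrite Rmin_left, Rmax_right in Hu by lra. rewrite Hcl_id; auto. }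
  assert (HMpos : forall n, 0 <= M n)
    by (intros n; apply (Rle_trans _ (Rabs (f n a))); [apply Rabs_pos | apply HfM; lra]).
  set (g := fun u => Series (fun n => f n (clamp u))).
  assert (Hunif : filterlim (fun N u => psum (fun n => f n (clamp u)) N) eventually
                    (locally (g : fct_UniformSpace R R_CompleteNormedModule))).
  { apply filterlim_locally. intros e.
    destruct (Series_tail_small M e HM (cond_pos e)) as [N0 HN0].
    exists N0. intros N HN u. apply ball_R_Rabs. unfold g. cbv beta. rewrite Rabs_minus_sym.
    pose proof (Series_tail_dominated _ M N (fun n => HfM n _ (Hcl u)) HM).
    pose proof (psum_le_mono M N0 N HMpos HN).
    pose proof (Rle_abs (Series M - psum M N0)). lra. }
  destruct (filterlim_RInt _ a c eventually _ g _ (fun N => is_RInt_psum _ _ a c N Hint_cl) Hunif)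
    as [If [HIf Hg]].
  replace (Series I) with If.
  - apply (is_RInt_ext g); [|exact Hg].
    intros u Hu. rewrite Rmin_left, Rmax_right in Hu by lra.
    unfold g. apply Series_ext. intros n. rewrite Hcl_id; auto.
  - symmetry. apply is_series_unique.
    apply (filterlim_ext (fun N => psum I (S N))).
    { intros N. rewrite sum_n_Reals. apply psum_sum_f_R0. }
    exact (proj1 (is_lim_seq_incr_1 (psum I) If) HIf).
Qed.

Lemma is_RInt_gen_increments (f F : R -> R) (l0 l1 : R) :
  (forall a c, 0 < a < c -> is_RInt f a c (F c - F a)) ->
  filterlim F (at_right 0) (locally l0) -> filterlim F (Rbar_locally p_infty) (locally l1) ->
  is_RInt_gen f (at_right 0) (Rbar_locally p_infty) (l1 - l0).
Proof.
  intros Hint H0 H1 P HP.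
  assert (Hlim : filterlim (fun ac : R * R => F (snd ac) + - F (fst ac))
                   (filter_prod (at_right 0) (Rbar_locally p_infty)) (locally (l1 + - l0))).
  { eapply filterlim_comp_2; [| |exact (filterlim_plus (K := R_AbsRing) l1 (- l0))].
    - exact (filterlim_comp _ _ _ snd F _ _ _ filterlim_snd H1).
    - apply (filterlim_comp _ _ _ (fun ac : R * R => F (fst ac)) Ropp _ (locally l0));
        [exact (filterlim_comp _ _ _ fst F _ _ _ filterlim_fst H0) | exact (filterlim_opp l0)]. }
  assert (Hord : filter_prod (at_right 0) (Rbar_locally p_infty)
                   (fun ac : R * R => 0 < fst ac < snd ac)).
  { apply (Filter_prod _ _ _ (fun a => 0 < a < 1) (fun c => 1 < c)).
    - exists (mkposreal 1 Rlt_0_1). intros a Ha Ha0.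
      change (Rabs (a - 0) < 1) in Ha. destruct (Rabs_def2 _ _ Ha). simpl. lra.
    - exists 1. auto.
    - simpl. intros. lra. }
  unfold filtermapi.
  apply (filter_imp (fun ac : R * R => P (F (snd ac) + - F (fst ac)) /\ 0 < fst ac < snd ac)).
  - intros [a c] [HPac Hac]. exists (F c - F a). split; [apply Hint; exact Hac | exact HPac].
  - exact (filter_and (fun ac : R * R => P (F (snd ac) + - F (fst ac))) _ (Hlim P HP) Hord).
Qed.

Lemma filterlim_exp_neg_mul k : 0 < k ->
  filterlim (fun c => exp (- k * c)) (Rbar_locally p_infty) (locally 0).
Proof.
  intros Hk. change (is_lim (fun c => exp (- k * c)) p_infty 0).
  apply (is_lim_ext (fun c => exp (- k * c + 0))); [intros c; rewrite Rplus_0_r; reflexivity|].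
  apply is_lim_comp_lin; [|lra].
  replace (Rbar_plus (Rbar_mult (- k) p_infty) 0) with m_infty; [exact is_lim_exp_m|].
  simpl. case Rle_dec; intros; [exfalso; lra | reflexivity].
Qed.

(** * Herglotz' trick for the cotangent *)

Lemma cosh_ge_1 z : 1 <= cosh z.
Proof.
  unfold cosh. rewrite exp_Ropp. pose proof (exp_pos z).
  assert (exp z + / exp z - 2 = (exp z - 1) ^ 2 / exp z) by (field; lra).
  assert (0 <= (exp z - 1) ^ 2 / exp z) by (apply Rdiv_le_0_compat; [apply pow2_ge_0 | lra]).
  lra.
Qed.

Lemma cosh_2x z : cosh (2 * z) = 2 * cosh z ^ 2 - 1.
Proof.
  unfold cosh. replace (- (2 * z)) with (- z + - z) by ring. replace (2 * z) with (z + z) by ring.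
  rewrite !exp_plus, exp_Ropp. pose proof (exp_pos z). field. lra.
Qed.

Lemma cosh_2x_sinh z : cosh (2 * z) = 1 + 2 * sinh z ^ 2.
Proof.
  rewrite cosh_2x. unfold cosh, sinh. rewrite exp_Ropp. pose proof (exp_pos z). field. lra.
Qed.

(* [re_pi_cot u e] is Re (pi cot (pi (u + i e))) and [re_inv y e] is Re (1 / (y + i e)). *)
Definition re_pi_cot (u e : R) : R :=
  PI * sin (2 * PI * u) / (cosh (2 * PI * e) - cos (2 * PI * u)).

Definition re_inv (y e : R) : R := y / (y ^ 2 + e ^ 2).

Lemma re_pi_cot_den_pos u e : 0 < u < 1 -> 0 < cosh (2 * PI * e) - cos (2 * PI * u).
Proof.
  intros Hu. pose proof (cosh_ge_1 (2 * PI * e)).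
  replace (2 * PI * u) with (2 * (PI * u)) by ring. rewrite cos_2a_sin.
  assert (0 < sin (PI * u)) by (apply sin_gt_0; pose proof PI_RGT_0; nra). nra.
Qed.

Lemma re_pi_cot_reflect u e : re_pi_cot (1 - u) e = - re_pi_cot u e.
Proof.
  unfold re_pi_cot. replace (2 * PI * (1 - u)) with (2 * PI - 2 * PI * u) by ring.
  rewrite sin_minus, cos_minus, sin_2PI, cos_2PI, !Rmult_0_l, Rplus_0_r, !Rmult_1_l.
  unfold Rdiv. ring.
Qed.

Lemma re_pi_cot_0 z : 0 < z < 1 -> re_pi_cot z 0 = PI * cos (PI * z) / sin (PI * z).
Proof.
  intros Hz. unfold re_pi_cot. rewrite Rmult_0_r, cosh_0.
  replace (2 * PI * z) with (2 * (PI * z)) by ring. rewrite sin_2a, cos_2a_sin.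
  assert (0 < sin (PI * z)) by (apply sin_gt_0; pose proof PI_RGT_0; nra).
  field. split; apply Rgt_not_eq; nra.
Qed.

Lemma re_pi_cot_dup v e : 0 < sin (PI * v) ->
  re_pi_cot v e = / 2 * (re_pi_cot (v / 2) (e / 2) + re_pi_cot ((v + 1) / 2) (e / 2)).
Proof.
  intros Hs. unfold re_pi_cot.
  replace (2 * PI * v) with (2 * (PI * v)) by ring.
  replace (2 * PI * e) with (2 * (PI * e)) by ring.
  replace (2 * PI * (v / 2)) with (PI * v) by field.
  replace (2 * PI * (e / 2)) with (PI * e) by field.
  replace (2 * PI * ((v + 1) / 2)) with (PI * v + PI) by field.
  rewrite sin_2a, cos_2a_cos, cosh_2x, neg_sin, neg_cos.
  pose proof (cosh_ge_1 (PI * e)). pose proof (sin2 (PI * v)) as Hsc. unfold Rsqr in Hsc.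
  assert (-1 < cos (PI * v) < 1) by nra.
  field. repeat split; nra.
Qed.

Lemma INR_pow2 j : INR (2 ^ j) = 2 ^ j.
Proof. rewrite pow_INR. reflexivity. Qed.

Lemma re_pi_cot_dup_iter b e j : 0 < b < 1 ->
  re_pi_cot b e = / 2 ^ j * psum (fun k => re_pi_cot ((b + INR k) / 2 ^ j) (e / 2 ^ j)) (2 ^ j).
Proof.
  intros Hb. induction j as [|j IH].
  - simpl. rewrite Rinv_1, Rmult_1_l, Rplus_0_l, !Rdiv_1_r, Rplus_0_r. reflexivity.
  - rewrite IH. set (M := (2 ^ j)%nat).
    assert (HM : INR M = 2 ^ j) by apply INR_pow2.
    assert (H2j : 0 < 2 ^ j) by (apply pow_lt; lra).
    replace (2 ^ S j)%nat with (M + M)%nat by (unfold M; simpl; lia).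
    rewrite <- tech_pow_Rmult, psum_add, <- psum_plus, Rinv_mult, (Rmult_comm (/ 2)),
      Rmult_assoc, <- (psum_scal (/ 2)).
    apply Rmult_eq_compat_l, psum_ext. intros k Hk.
    assert (Hk1 : INR k + 1 <= INR M) by (rewrite <- S_INR; apply le_INR; lia).
    pose proof (pos_INR k).
    rewrite re_pi_cot_dup.
    + rewrite plus_INR, HM. do 3 f_equal; field; lra.
    + apply sin_gt_0; pose proof PI_RGT_0.
      * apply Rmult_lt_0_compat; [lra | apply Rdiv_lt_0_compat; lra].
      * rewrite <- (Rmult_1_r PI) at 2. apply Rmult_lt_compat_l; [lra|].
        apply Rmult_lt_reg_r with (2 ^ j); [lra|].
        unfold Rdiv. rewrite Rmult_assoc, Rinv_l; lra.
Qed.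

Lemma re_pi_cot_pairs b e j : 0 < b < 1 ->
  re_pi_cot b e = psum (fun k => / 2 ^ S j *
     (re_pi_cot ((INR k + b) / 2 ^ S j) (e / 2 ^ S j)
      - re_pi_cot ((INR k + 1 - b) / 2 ^ S j) (e / 2 ^ S j))) (2 ^ j).
Proof.
  intros Hb. rewrite (re_pi_cot_dup_iter b e (S j) Hb). set (M := (2 ^ j)%nat).
  assert (HM : INR M = 2 ^ j) by apply INR_pow2.
  replace (2 ^ S j)%nat with (M + M)%nat by (unfold M; simpl; lia).
  rewrite psum_add, (psum_rev (fun k => re_pi_cot ((b + INR (M + k)) / 2 ^ S j) (e / 2 ^ S j))).
  rewrite Rmult_plus_distr_l, <- !psum_scal, <- psum_plus. apply psum_ext.
  intros k Hk.
  replace ((b + INR (M + (M - 1 - k))) / 2 ^ S j) with (1 - (INR k + 1 - b) / 2 ^ S j).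
  - rewrite re_pi_cot_reflect, (Rplus_comm b). ring.
  - rewrite !plus_INR, !minus_INR by lia. rewrite HM. simpl pow. simpl INR.
    field. apply pow_nonzero; lra.
Qed.

Lemma is_lim_seq_comp_0 (f : R -> R) L (v : nat -> R) :
  is_lim f 0 L -> is_lim_seq v 0 -> (forall j, v j <> 0) -> is_lim_seq (fun j => f (v j)) L.
Proof.
  intros Hf Hv Hv0. apply (is_lim_comp_seq f v 0 L); auto.
  exists 0%nat. intros n _ H. apply (Hv0 n). injection H; auto.
Qed.

Lemma is_lim_seq_sinh_div (v : nat -> R) :
  is_lim_seq v 0 -> (forall j, v j <> 0) -> is_lim_seq (fun j => sinh (v j) / v j) 1.
Proof.
  intros Hv Hv0.
  apply (is_lim_seq_ext (fun j => ((exp (v j) - 1) / v j + (exp (- v j) - 1) / (- v j)) / 2)).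
  { intros j. unfold sinh. field. auto. }
  replace (Finite 1) with (Finite ((1 + 1) / 2)) by (f_equal; field).
  apply is_lim_seq_div'; [apply is_lim_seq_plus' | apply is_lim_seq_const | lra].
  - exact (is_lim_seq_comp_0 _ 1 v is_lim_div_expm1_0 Hv Hv0).
  - apply (is_lim_seq_comp_0 (fun y => (exp y - 1) / y) 1 (fun j => - v j) is_lim_div_expm1_0).
    + rewrite <- Ropp_0. exact (proj1 (is_lim_seq_opp v 0) Hv).
    + intros j. apply Ropp_neq_0_compat, Hv0.
Qed.

Lemma is_lim_seq_scaled_div (f : R -> R) c (v : nat -> R) :
  (forall w : nat -> R, is_lim_seq w 0 -> (forall j, w j <> 0) ->
     is_lim_seq (fun j => f (w j) / w j) 1) ->
  f 0 = 0 -> is_lim_seq v 0 -> (forall j, v j <> 0) ->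
  is_lim_seq (fun j => f (c * v j) / v j) c.
Proof.
  intros Hf Hf0 Hv Hv0. destruct (Req_dec c 0) as [->|Hc].
  - apply (is_lim_seq_ext (fun _ => 0)); [|apply is_lim_seq_const].
    intros j. rewrite Rmult_0_l, Hf0. unfold Rdiv. ring.
  - apply (is_lim_seq_ext (fun j => c * (f (c * v j) / (c * v j)))).
    { intros j. field. auto. }
    replace (Finite c) with (Finite (c * 1)) by (f_equal; ring).
    apply is_lim_seq_mult'; [apply is_lim_seq_const | apply Hf].
    + replace (Finite 0) with (Finite (c * 0)) by (f_equal; ring).
      apply is_lim_seq_mult'; [apply is_lim_seq_const | exact Hv].
    + intros j. apply Rmult_integral_contrapositive. auto.
Qed.

Lemma re_pi_cot_scaled y e t : t <> 0 -> 0 < sin (PI * y * t) ->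
  t * re_pi_cot (y * t) (e * t) =
  PI * (sin (2 * PI * y * t) / t)
    / (2 * (sinh (PI * e * t) / t) ^ 2 + 2 * (sin (PI * y * t) / t) ^ 2).
Proof.
  intros Ht Hs. unfold re_pi_cot.
  replace (2 * PI * (e * t)) with (2 * (PI * e * t)) by ring.
  replace (2 * PI * (y * t)) with (2 * (PI * y * t)) by ring.
  replace (2 * PI * y * t) with (2 * (PI * y * t)) by ring.
  rewrite cos_2a_sin, cosh_2x_sinh.
  assert (0 <= sinh (PI * e * t) ^ 2) by apply pow2_ge_0.
  field. split; [auto | nra].
Qed.

Lemma is_lim_seq_re_pi_cot_scaled y e (t : nat -> R) : 0 < y ->
  is_lim_seq t 0 -> (forall j, 0 < t j) ->
  is_lim_seq (fun j => t j * re_pi_cot (y * t j) (e * t j)) (re_inv y e).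
Proof.
  intros Hy Ht Ht0. pose proof PI_RGT_0 as HPI.
  assert (Ht0' : forall j, t j <> 0) by (intros j; apply Rgt_not_eq, Ht0).
  assert (Hsin : eventually (fun j => 0 < sin (PI * y * t j))).
  { destruct (filterlim_Rabs_lt _ t 0 (/ y) Ht (Rinv_0_lt_compat _ Hy)) as [N HN].
    exists N. intros j Hj. specialize (HN j Hj). pose proof (Ht0 j).
    rewrite Rminus_0_r, Rabs_right in HN by lra.
    apply sin_gt_0; [apply Rmult_lt_0_compat; [apply Rmult_lt_0_compat|]; lra|].
    apply Rmult_lt_compat_l with (r := y) in HN; auto. rewrite Rinv_r in HN; nra. }
  apply (is_lim_seq_ext_loc
    (fun j => PI * (sin (2 * PI * y * t j) / t j)
       / (2 * (sinh (PI * e * t j) / t j) ^ 2 + 2 * (sin (PI * y * t j) / t j) ^ 2))).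
  { eapply filter_imp; [|exact Hsin]. intros j Hj. symmetry. apply re_pi_cot_scaled; auto. }
  assert (Hsinc : forall w : nat -> R, is_lim_seq w 0 -> (forall j, w j <> 0) ->
            is_lim_seq (fun j => sin (w j) / w j) 1)
    by (intros w; exact (is_lim_seq_comp_0 (fun z => sin z / z) 1 w is_lim_sinc_0)).
  pose proof (is_lim_seq_scaled_div sin (2 * PI * y) t Hsinc sin_0 Ht Ht0') as H2.
  pose proof (is_lim_seq_scaled_div sin (PI * y) t Hsinc sin_0 Ht Ht0') as H1.
  pose proof (is_lim_seq_scaled_div sinh (PI * e) t is_lim_seq_sinh_div sinh_0 Ht Ht0') as H3.
  assert (0 < (PI * y) ^ 2) by (apply pow_lt; nra).
  assert (0 < y ^ 2) by (apply pow_lt; lra).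
  pose proof (pow2_ge_0 (PI * e)). pose proof (pow2_ge_0 e).
  replace (Finite (re_inv y e))
    with (Finite (PI * (2 * PI * y) / (2 * (PI * e) ^ 2 + 2 * (PI * y) ^ 2)))
    by (f_equal; unfold re_inv; field; split; apply Rgt_not_eq; lra).
  apply is_lim_seq_div'; [| |apply Rgt_not_eq; lra].
  { apply is_lim_seq_mult'; [apply is_lim_seq_const | exact H2]. }
  apply is_lim_seq_plus'; apply is_lim_seq_mult'; try apply is_lim_seq_const;
    apply (is_lim_seq_continuous (fun z => z ^ 2));
    auto using derivable_continuous_pt, derivable_pt_pow.
Qed.

Lemma sin_ge_third a : 0 <= a <= 2 -> a / 3 <= sin a.
Proof.
  intros Ha. assert (a <= PI) by (pose proof PI2_3_2; lra).
  destruct (SIN a (proj1 Ha) H) as [Hlb _]. eapply Rle_trans; [|exact Hlb].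
  unfold sin_lb, sin_approx, sin_term. simpl.
  assert (0 <= a * a <= 4) by nra.
  assert (0 <= a * a * (a * a) * (42 - a * a)) by (apply Rmult_le_pos; nra).
  nra.
Qed.

Lemma sin_PI_ge u : 0 <= u <= 1 / 2 -> u <= sin (PI * u).
Proof.
  intros Hu. pose proof PI2_3_2. pose proof PI_4.
  assert (PI * u / 3 <= sin (PI * u)) by (apply sin_ge_third; nra). nra.
Qed.

Definition re_pi_cot_deriv (u e : R) : R :=
  2 * PI ^ 2 * (cosh (2 * PI * e) * cos (2 * PI * u) - 1)
    / (cosh (2 * PI * e) - cos (2 * PI * u)) ^ 2.

Lemma re_pi_cot_derivable u e : 0 < u < 1 ->
  derivable_pt_lim (fun v => re_pi_cot v e) u (re_pi_cot_deriv u e).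
Proof.
  intros Hu. apply is_derive_Reals. pose proof (re_pi_cot_den_pos u e Hu).
  unfold re_pi_cot, re_pi_cot_deriv. auto_derive; [lra|].
  pose proof (sin2 (2 * PI * u)) as Hsc. unfold Rsqr in Hsc.
  replace (cosh (2 * PI * e) * cos (2 * PI * u) - 1) with
    (cosh (2 * PI * e) * cos (2 * PI * u) - cos (2 * PI * u) * cos (2 * PI * u)
     - sin (2 * PI * u) * sin (2 * PI * u)) by (rewrite Hsc; ring).
  field. lra.
Qed.

(* With [p = cosh (2 pi e) - 1] and [q = 1 - cos (2 pi u)], the derivative is
   [2 pi^2 ((1 + p) (1 - q) - 1) / (p + q)^2]. *)
Lemma Rabs_pq_ratio_le p q : 0 <= p -> 0 < q <= 2 ->
  Rabs ((1 + p) * (1 - q) - 1) / (p + q) ^ 2 <= 3 / (2 * q).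
Proof.
  intros Hp Hq. assert (0 < (p + q) ^ 2) by (apply pow_lt; lra).
  assert (0 <= p * q * (2 - q)) by (apply Rmult_le_pos; [apply Rmult_le_pos|]; lra).
  assert (0 <= p * q) by (apply Rmult_le_pos; lra).
  assert (Rabs ((1 + p) * (1 - q) - 1) * (2 * q) <= 3 * (p + q) ^ 2).
  { destruct (Rle_dec 0 ((1 + p) * (1 - q) - 1)).
    - rewrite Rabs_right by lra. nra.
    - rewrite Rabs_left by lra. nra. }
  apply Rmult_le_reg_r with ((p + q) ^ 2 * (2 * q)); [nra|].
  unfold Rdiv. field_simplify; [|lra|lra]. nra.
Qed.

Lemma Rabs_re_pi_cot_deriv_le u e : 0 < u <= 1 / 2 -> Rabs (re_pi_cot_deriv u e) <= 24 / u ^ 2.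
Proof.
  intros Hu. pose proof PI_4. pose proof PI2_3_2.
  set (p := cosh (2 * PI * e) - 1). set (q := 1 - cos (2 * PI * u)).
  assert (Hp : 0 <= p) by (unfold p; pose proof (cosh_ge_1 (2 * PI * e)); lra).
  assert (Hq : 2 * u ^ 2 <= q).
  { unfold q. replace (2 * PI * u) with (2 * (PI * u)) by ring. rewrite cos_2a_sin.
    pose proof (sin_PI_ge u ltac:(lra)). nra. }
  assert (Hq2 : q <= 2) by (unfold q; pose proof (COS_bound (2 * PI * u)); lra).
  assert (Hu2 : 0 < u ^ 2) by (apply pow_lt; lra).
  pose proof (Rabs_pq_ratio_le p q Hp ltac:(lra)) as Hpq.
  replace (re_pi_cot_deriv u e) with (2 * PI ^ 2 * (((1 + p) * (1 - q) - 1) / (p + q) ^ 2)).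
  2: { replace (p + q) with (cosh (2 * PI * e) - cos (2 * PI * u)) by (unfold p, q; ring).
       unfold re_pi_cot_deriv, p, q, Rdiv. ring. }
  rewrite Rabs_mult, Rabs_right by (apply Rle_ge; nra).
  unfold Rdiv at 1. rewrite Rabs_mult, (Rabs_right (/ _))
    by (apply Rle_ge, Rlt_le, Rinv_0_lt_compat, pow_lt; lra).
  assert (3 / (2 * q) <= 3 / (4 * u ^ 2))
    by (apply Rmult_le_compat_l; [lra | apply Rinv_le_contravar; lra]).
  assert (0 <= Rabs ((1 + p) * (1 - q) - 1) * / (p + q) ^ 2)
    by (apply Rmult_le_pos; [apply Rabs_pos | apply Rlt_le, Rinv_0_lt_compat, pow_lt; lra]).
  replace (24 / u ^ 2) with (2 * 16 * (3 / (4 * u ^ 2))) by (field; lra).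
  apply Rmult_le_compat; [nra | lra | nra | unfold Rdiv in Hpq; lra].
Qed.

Lemma re_pi_cot_lipschitz u1 u2 e : 0 < u1 < u2 -> u2 <= 1 / 2 ->
  Rabs (re_pi_cot u2 e - re_pi_cot u1 e) <= 24 / u1 ^ 2 * (u2 - u1).
Proof.
  intros Hu12 Hu2.
  destruct (MVT_cor2 (fun v => re_pi_cot v e) (fun v => re_pi_cot_deriv v e) u1 u2
              (proj2 Hu12)) as [c [-> Hc]].
  { intros c Hc. apply re_pi_cot_derivable. lra. }
  rewrite Rabs_mult, (Rabs_right (u2 - u1)) by lra.
  apply Rmult_le_compat_r; [lra|].
  eapply Rle_trans; [apply Rabs_re_pi_cot_deriv_le; lra|].
  apply Rmult_le_compat_l; [lra|]. apply Rinv_le_contravar; [apply pow_lt; lra|].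
  apply pow_incr; lra.
Qed.

Lemma re_pi_cot_pair_bound b e k N : 0 < b < 1 / 2 -> INR k + 1 <= N / 2 ->
  Rabs (/ N * (re_pi_cot ((INR k + b) / N) (e / N) - re_pi_cot ((INR k + 1 - b) / N) (e / N)))
    <= 24 / b ^ 2 * / (INR k + 1) ^ 2.
Proof.
  intros Hb HkN. pose proof (pos_INR k). assert (HN : 0 < N) by lra.
  assert (Hkb : b * (INR k + 1) <= INR k + b) by nra.
  assert (Hbk : 0 < b * (INR k + 1)) by nra.
  pose proof (re_pi_cot_lipschitz ((INR k + b) / N) ((INR k + 1 - b) / N) (e / N)) as Hlip.
  replace (24 / ((INR k + b) / N) ^ 2 * ((INR k + 1 - b) / N - (INR k + b) / N))
    with (N * (24 * (1 - 2 * b) / (INR k + b) ^ 2)) in Hlip by (field; lra).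
  rewrite Rabs_mult, Rabs_right, Rabs_minus_sym by (apply Rle_ge, Rlt_le, Rinv_0_lt_compat; lra).
  apply Rle_trans with (/ N * (N * (24 * (1 - 2 * b) / (INR k + b) ^ 2))).
  - apply Rmult_le_compat_l; [apply Rlt_le, Rinv_0_lt_compat; lra|].
    apply Hlip; [split|]; unfold Rdiv.
    + apply Rmult_lt_0_compat; [lra | apply Rinv_0_lt_compat; lra].
    + apply Rmult_lt_compat_r; [apply Rinv_0_lt_compat|]; lra.
    + apply Rmult_le_reg_r with N; [lra|]. rewrite Rmult_assoc, Rinv_l; lra.
  - rewrite <- Rmult_assoc, Rinv_l, Rmult_1_l by lra.
    replace (24 / b ^ 2 * / (INR k + 1) ^ 2) with (24 / (b * (INR k + 1)) ^ 2) by (field; lra).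
    apply Rle_trans with (24 / (INR k + b) ^ 2).
    + unfold Rdiv. apply Rmult_le_compat_r; [apply Rlt_le, Rinv_0_lt_compat, pow_lt|]; lra.
    + unfold Rdiv. apply Rmult_le_compat_l; [lra|].
      apply Rinv_le_contravar; [apply pow_lt; lra | apply pow_incr; lra].
Qed.

Lemma is_lim_seq_inv_pow2 : is_lim_seq (fun j => / 2 ^ S j) 0.
Proof.
  apply (is_lim_seq_ext (fun j => (/ 2) ^ S j)); [intros j; rewrite pow_inv; reflexivity|].
  apply (is_lim_seq_incr_1 (fun j => (/ 2) ^ j)), is_lim_seq_geom.
  rewrite Rabs_right; lra.
Qed.

Theorem is_series_re_pi_cot b e : 0 < b < 1 / 2 ->
  is_series (fun k => re_inv (INR k + b) e - re_inv (INR k + 1 - b) e) (re_pi_cot b e).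
Proof.
  intros Hb.
  set (l := fun k => re_inv (INR k + b) e - re_inv (INR k + 1 - b) e).
  set (a := fun j k => if (k <? 2 ^ j)%nat then / 2 ^ S j *
     (re_pi_cot ((INR k + b) / 2 ^ S j) (e / 2 ^ S j)
      - re_pi_cot ((INR k + 1 - b) / 2 ^ S j) (e / 2 ^ S j)) else 0).
  set (D := fun k => 24 / b ^ 2 * / (INR k + 1) ^ 2).
  assert (HSa : forall j, Series (a j) = re_pi_cot b e).
  { intros j. unfold a. rewrite (is_series_unique _ _ (is_series_psum _ _)).
    symmetry. apply re_pi_cot_pairs. lra. }
  assert (HD : ex_series D) by apply (ex_series_scal_l _ _ ex_series_inv_sq).
  assert (Hdom : forall j k, Rabs (a j k) <= D k).
  { intros j k. unfold a, D. destruct (Nat.ltb_spec k (2 ^ j)) as [Hk|Hk].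
    - apply re_pi_cot_pair_bound; [lra|].
      rewrite <- tech_pow_Rmult, <- INR_pow2, <- S_INR.
      replace (2 * INR (2 ^ j) / 2) with (INR (2 ^ j)) by field. apply le_INR. lia.
    - rewrite Rabs_R0. pose proof (pos_INR k).
      apply Rmult_le_pos; [apply Rlt_le, Rdiv_lt_0_compat; [lra | apply pow_lt; lra]|].
      apply Rlt_le, Rinv_0_lt_compat, pow_lt. lra. }
  assert (Hlim : forall k, is_lim_seq (fun j => a j k) (l k)).
  { intros k. pose proof (pos_INR k).
    apply (is_lim_seq_ext_loc (fun j =>
        / 2 ^ S j * re_pi_cot ((INR k + b) * / 2 ^ S j) (e * / 2 ^ S j)
      - / 2 ^ S j * re_pi_cot ((INR k + 1 - b) * / 2 ^ S j) (e * / 2 ^ S j))).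
    - exists k. intros j Hj. unfold a. destruct (Nat.ltb_spec k (2 ^ j)) as [_|Hk].
      + unfold Rdiv. ring.
      + pose proof (Nat.pow_gt_lin_r 2 j). lia.
    - assert (Ht : forall j, 0 < / 2 ^ S j) by (intros j; apply Rinv_0_lt_compat, pow_lt; lra).
      apply is_lim_seq_minus'; apply is_lim_seq_re_pi_cot_scaled; auto using is_lim_seq_inv_pow2;
        lra. }
  assert (Hl : forall k, Rabs (l k) <= D k)
    by (intros k; exact (filterlim_Rabs_le eventually (fun j => a j k) _ _ (Hlim k)
                                            (fun j => Hdom j k))).
  assert (HT : is_lim_seq (fun j => Series (a j)) (Series l))
    by exact (filterlim_Series_dominated eventually a l D Hlim Hdom HD).
  apply (is_lim_seq_ext _ (fun _ => re_pi_cot b e)) in HT; [|exact HSa].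
  apply is_lim_seq_unique in HT. rewrite Lim_seq_const in HT. injection HT as ->.
  apply Series_correct, (ex_series_Rabs_le _ D); auto.
Qed.

(** * The series of shifted pairs *)

Lemma re_inv_0 y : 0 < y -> re_inv y 0 = / y.
Proof. intros Hy. unfold re_inv. field. lra. Qed.

Lemma is_series_re_pi_cot_0 z : 0 < z < 1 ->
  is_series (fun k => / (INR k + z) - / (INR k + 1 - z)) (re_pi_cot z 0).
Proof.
  assert (Hlt : forall y, 0 < y < 1 / 2 ->
             is_series (fun k => / (INR k + y) - / (INR k + 1 - y)) (re_pi_cot y 0)).
  { intros y Hy. eapply is_series_ext_R; [|apply (is_series_re_pi_cot y 0 Hy)].
    intros k. pose proof (pos_INR k). cbv beta. rewrite !re_inv_0 by lra. reflexivity. }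
  intros Hz. destruct (Rlt_le_dec z (1 / 2)) as [Hlow|Hge]; [apply Hlt; lra|].
  destruct (Rle_lt_or_eq_dec _ _ Hge) as [Hgt|<-].
  - assert (Hopp : is_series (fun k => - (/ (INR k + (1 - z)) - / (INR k + 1 - (1 - z))))
                      (- re_pi_cot (1 - z) 0))
      by exact (is_series_opp _ _ (Hlt (1 - z) ltac:(lra))).
    rewrite re_pi_cot_reflect, Ropp_involutive in Hopp.
    eapply is_series_ext_R; [|exact Hopp]. intros k. simpl.
    replace (INR k + 1 - (1 - z)) with (INR k + z) by ring.
    replace (INR k + (1 - z)) with (INR k + 1 - z) by ring. ring.
  - replace (re_pi_cot (1 / 2) 0) with 0.
    + eapply is_series_ext_R; [|exact (is_series_psum (fun _ => 0) 0)].
      intros k. simpl. replace (INR k + 1 - 1 / 2) with (INR k + 1 / 2) by field. ring.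
    + unfold re_pi_cot. replace (2 * PI * (1 / 2)) with PI by field.
      rewrite sin_PI. unfold Rdiv. ring.
Qed.

Lemma cos_pi_sqrt_nonneg z : 0 <= z -> cos_pi_sqrt z = cos (PI * sqrt z).
Proof.
  intros Hz. unfold cos_pi_sqrt, cos.
  destruct (exist_cos (PI * sqrt z)²) as [l Hl]. apply is_series_unique.
  eapply is_series_ext_R; [|exact (proj2 (is_series_Reals _ _) Hl)].
  intros n. unfold cos_n. rewrite Rsqr_mult, Rsqr_sqrt by auto.
  replace (- PI ^ 2 * z) with (-1 * (PI² * z)) by (unfold Rsqr; ring).
  rewrite !Rpow_mult_distr. unfold Rdiv. ring.
Qed.

Lemma is_series_even_terms (t : nat -> R) l :
  is_series t l -> (forall m, t (2 * m + 1)%nat = 0) -> is_series (fun m => t (2 * m)%nat) l.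
Proof.
  intros Ht Hodd.
  apply (filterlim_ext (fun N => sum_n t (2 * N))).
  - intros N. rewrite !sum_n_Reals. induction N as [|N IH]; [reflexivity|].
    replace (2 * S N)%nat with (S (S (2 * N))) by lia.
    rewrite !tech5, IH. replace (S (2 * N)) with (2 * N + 1)%nat by lia.
    rewrite Hodd. replace (S (2 * N + 1)) with (2 * S N)%nat by lia.
    rewrite Rplus_0_r. reflexivity.
  - apply (is_lim_seq_subseq (sum_n t) l (fun N => (2 * N)%nat)); [|exact Ht].
    intros P [N HN]. exists N. intros n Hn. apply HN. lia.
Qed.

Lemma cos_pi_sqrt_nonpos z : z <= 0 -> cos_pi_sqrt z = cosh (PI * sqrt (- z)).
Proof.
  intros Hz. set (y := PI * sqrt (- z)).
  assert (Hy2 : y ^ 2 = PI ^ 2 * - z)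
    by (unfold y; rewrite Rpow_mult_distr, pow2_sqrt; lra).
  assert (Hcosh : is_series (fun n => / 2 * (y ^ n * / INR (Factorial.fact n)
                                           + (- y) ^ n * / INR (Factorial.fact n))) (cosh y)).
  { assert (He : forall s, is_series (fun n => s ^ n * / INR (Factorial.fact n)) (exp s)).
    { intros s. eapply is_series_ext_R; [|apply is_exp_Reals].
      intros n. simpl. rewrite pow_n_pow. reflexivity. }
    unfold cosh. replace ((exp y + exp (- y)) / 2) with (/ 2 * (exp y + exp (- y))) by field.
    exact (is_series_scal_l _ _ _ (is_series_plus _ _ _ _ (He y) (He (- y)))). }
  unfold cos_pi_sqrt. apply is_series_unique.
  eapply is_series_ext_R; [|apply (is_series_even_terms _ _ Hcosh)].
  - intros n. cbv beta. rewrite !pow_mult.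
    replace ((- y) ^ 2) with (y ^ 2) by ring. rewrite Hy2.
    replace (- PI ^ 2 * z) with (PI ^ 2 * - z) by ring. field.
    apply not_0_INR, Factorial.fact_neq_0.
  - intros m. rewrite !pow_add, !pow_mult. replace ((- y) ^ 2) with (y ^ 2) by ring. ring.
Qed.

Lemma sqrt_4_mul w : 0 <= w -> sqrt (4 * w) = 2 * sqrt w.
Proof.
  intros Hw. rewrite sqrt_mult by lra. f_equal.
  replace 4 with (2 * 2) by ring. apply sqrt_square. lra.
Qed.

Lemma pi_cot_add a c : 0 < sin a -> 0 < sin c ->
  PI * cos a / sin a + PI * cos c / sin c = 2 * (PI * sin (a + c) / (cos (c - a) - cos (a + c))).
Proof.
  intros Ha Hc. rewrite sin_plus, cos_plus, cos_minus.
  field. repeat split; apply Rgt_not_eq; nra.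
Qed.

Lemma is_series_pair_fractions_nonneg b w : 0 < b < 1 / 2 -> 0 <= w ->
  is_series (fun k => (INR k + b) / ((INR k + b) ^ 2 + w)
                      - (INR k + 1 - b) / ((INR k + 1 - b) ^ 2 + w))
    (PI * sin (2 * PI * b) / (cos_pi_sqrt (-4 * w) - cos (2 * PI * b))).
Proof.
  intros Hb Hw. set (e := sqrt w).
  assert (He2 : e ^ 2 = w) by (apply pow2_sqrt; auto).
  rewrite cos_pi_sqrt_nonpos by lra.
  replace (- (-4 * w)) with (4 * w) by ring. rewrite sqrt_4_mul by auto. fold e.
  replace (PI * (2 * e)) with (2 * PI * e) by ring.
  eapply is_series_ext_R; [|exact (is_series_re_pi_cot b e Hb)].
  intros k. unfold re_inv. rewrite He2. reflexivity.
Qed.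

Lemma is_series_pair_fractions_neg b w : 0 < b < 1 / 2 -> - b ^ 2 < w < 0 ->
  is_series (fun k => (INR k + b) / ((INR k + b) ^ 2 + w)
                      - (INR k + 1 - b) / ((INR k + 1 - b) ^ 2 + w))
    (PI * sin (2 * PI * b) / (cos_pi_sqrt (-4 * w) - cos (2 * PI * b))).
Proof.
  intros Hb Hw. set (c := sqrt (- w)).
  assert (Hc2 : c ^ 2 = - w) by (apply pow2_sqrt; lra).
  assert (Hc : 0 < c) by (apply sqrt_lt_R0; lra).
  assert (Hcb : c < b) by nra.
  rewrite cos_pi_sqrt_nonneg by lra.
  replace (-4 * w) with (4 * - w) by ring. rewrite sqrt_4_mul by lra. fold c.
  assert (Hsin_pos : forall z, 0 < z < 1 -> 0 < sin (PI * z))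
    by (intros z Hz; apply sin_gt_0; pose proof PI_RGT_0; nra).
  replace (PI * sin (2 * PI * b) / (cos (PI * (2 * c)) - cos (2 * PI * b)))
    with (/ 2 * (re_pi_cot (b - c) 0 + re_pi_cot (b + c) 0)).
  - apply (is_series_ext_R (fun k => / 2 * ((/ (INR k + (b - c)) - / (INR k + 1 - (b - c)))
                                     + (/ (INR k + (b + c)) - / (INR k + 1 - (b + c)))))).
    + intros k. pose proof (pos_INR k). replace w with (- c ^ 2) by lra.
      field. repeat split; nra.
    + exact (is_series_scal_l _ _ _ (is_series_plus _ _ _ _
               (is_series_re_pi_cot_0 (b - c) ltac:(lra))
               (is_series_re_pi_cot_0 (b + c) ltac:(lra)))).
  - rewrite !re_pi_cot_0 by lra.
    rewrite pi_cot_add by (apply Hsin_pos; lra).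
    replace (PI * (b - c) + PI * (b + c)) with (2 * PI * b) by ring.
    replace (PI * (b + c) - PI * (b - c)) with (PI * (2 * c)) by ring.
    field. apply Rgt_not_eq.
    replace (PI * (2 * c)) with (2 * (PI * c)) by ring.
    replace (2 * PI * b) with (2 * (PI * b)) by ring.
    rewrite !cos_2a_sin.
    assert (sin (PI * c) < sin (PI * b)).
    { apply sin_increasing_1; pose proof PI_RGT_0; nra. }
    pose proof (Hsin_pos c ltac:(lra)). nra.
Qed.

Theorem is_series_pair_fractions b w : 0 < b < 1 / 2 -> - b ^ 2 < w ->
  is_series (fun k => (INR k + b) / ((INR k + b) ^ 2 + w)
                      - (INR k + 1 - b) / ((INR k + 1 - b) ^ 2 + w))
    (PI * sin (2 * PI * b) / (cos_pi_sqrt (-4 * w) - cos (2 * PI * b))).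
Proof.
  intros Hb Hw. destruct (Rle_lt_dec 0 w).
  - apply is_series_pair_fractions_nonneg; auto.
  - apply is_series_pair_fractions_neg; lra.
Qed.

(** * The theta integrand *)

Lemma exp_le_mono y z : y <= z -> exp y <= exp z.
Proof. intros [H|H]; [apply Rlt_le, exp_increasing; auto | rewrite H; lra]. Qed.

Lemma exp_pow y n : exp y ^ n = exp (INR n * y).
Proof.
  induction n as [|n IH]; [simpl; rewrite Rmult_0_l, exp_0; reflexivity|].
  rewrite S_INR. simpl pow. rewrite IH, <- exp_plus. f_equal. ring.
Qed.

Lemma Rpower_le_pow q s n : 0 < q < 1 -> INR n <= s -> Rpower q s <= q ^ n.
Proof.
  intros Hq Hs. unfold Rpower.
  rewrite <- (exp_ln q) at 2 by lra. rewrite exp_pow.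
  apply exp_le_mono. assert (ln q < 0) by (rewrite <- ln_1; apply ln_increasing; lra). nra.
Qed.

Lemma ex_series_lin_geom q : 0 < q < 1 -> ex_series (fun n => (INR n + 1) * q ^ n).
Proof.
  intros Hq. apply ex_series_Rabs, (ex_series_DAlembert _ q); [lra | |].
  - intros n. pose proof (pos_INR n). pose proof (pow_lt q n ltac:(lra)). apply Rgt_not_eq. nra.
  - apply (is_lim_seq_ext (fun n => (1 + / (INR n + 1)) * q)).
    + intros n. pose proof (pos_INR n). pose proof (pow_lt q n ltac:(lra)).
      rewrite S_INR. simpl pow. rewrite Rabs_right; [field; lra|].
      apply Rle_ge, Rdiv_le_0_compat; apply Rmult_le_pos || apply Rmult_lt_0_compat; nra.
    + replace (Finite q) with (Finite ((1 + 0) * q)) by (f_equal; ring).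
      apply is_lim_seq_mult'; [|apply is_lim_seq_const].
      apply is_lim_seq_plus'; [apply is_lim_seq_const|].
      apply (is_lim_seq_inv _ p_infty); [|discriminate].
      eapply is_lim_seq_plus; [apply is_lim_seq_INR | apply is_lim_seq_const | constructor].
Qed.

Lemma INR_le_mul_shift n mu : 0 <= mu -> INR n <= INR n * (INR n + mu).
Proof. intros Hmu. destruct n; [simpl; lra|]. rewrite S_INR. pose proof (pos_INR n). nra. Qed.

Lemma Rabs_theta_term_nonneg_le mu q n : 0 <= mu <= 1 -> 0 < q < 1 ->
  Rabs (theta_term mu q (Z.of_nat n)) <= (INR n + 1) * q ^ n.
Proof.
  intros Hmu Hq. unfold theta_term. rewrite <- INR_IZR_INZ. pose proof (pos_INR n).
  assert (0 < Rpower q (INR n * (INR n + mu))) by apply exp_pos.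
  rewrite Rabs_mult, !Rabs_right by lra.
  apply Rmult_le_compat; [lra | lra | lra|].
  apply Rpower_le_pow; [lra | apply INR_le_mul_shift; lra].
Qed.

Lemma Rabs_theta_term_neg_le mu q n : 0 <= mu <= 1 -> 0 < q < 1 ->
  Rabs (theta_term mu q (- Z.of_nat (S n))) <= (INR n + 1) * q ^ n.
Proof.
  intros Hmu Hq. unfold theta_term. rewrite opp_IZR, <- INR_IZR_INZ, S_INR. pose proof (pos_INR n).
  assert (0 < Rpower q (- (INR n + 1) * (- (INR n + 1) + mu))) by apply exp_pos.
  rewrite Rabs_mult, Rabs_left1, Rabs_right by lra.
  apply Rmult_le_compat; [lra | lra | lra | apply Rpower_le_pow; nra].
Qed.

Section ThetaLaplace.

Variables mu Lam x : R.
Hypothesis Hmu : 0 < mu < 1.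
Hypothesis HLam : 0 < Lam.
Hypothesis Hx : 0 < x.

(* After multiplication by [exp (- u x)], the terms of theta at [n] and at [- n - 1]
   decay like [exp (- alpha n u)] and [exp (- beta n u)]. *)
Definition alpha n := Lam * (INR n * (INR n + mu)) + x.
Definition beta n := Lam * ((INR n + 1) * (INR n + 1 - mu)) + x.

Definition pair_term n u :=
  (INR n + mu / 2) * exp (- alpha n * u) - (INR n + 1 - mu / 2) * exp (- beta n * u).

Definition pair_prim n u :=
  - (INR n + mu / 2) * exp (- alpha n * u) / alpha n
  + (INR n + 1 - mu / 2) * exp (- beta n * u) / beta n.

Lemma alpha_ge n : Lam * INR n + x <= alpha n.
Proof.
  unfold alpha. pose proof (INR_le_mul_shift n mu ltac:(lra)) as Hn.
  pose proof (Rmult_le_compat_l Lam _ _ (Rlt_le _ _ HLam) Hn). lra.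
Qed.

Lemma beta_ge n : Lam * INR n + x <= beta n.
Proof.
  unfold beta. pose proof (pos_INR n).
  assert (Hn : INR n <= (INR n + 1) * (INR n + 1 - mu)) by nra.
  pose proof (Rmult_le_compat_l Lam _ _ (Rlt_le _ _ HLam) Hn). lra.
Qed.

Lemma alpha_pos n : 0 < alpha n.
Proof. pose proof (alpha_ge n). pose proof (pos_INR n). nra. Qed.

Lemma beta_pos n : 0 < beta n.
Proof. pose proof (beta_ge n). pose proof (pos_INR n). nra. Qed.

Lemma theta_term_nonneg_exp u n :
  theta_term mu (exp (- Lam * u)) (Z.of_nat n) * exp (- u * x)
  = (INR n + mu / 2) * exp (- alpha n * u).
Proof.
  unfold theta_term, Rpower, alpha. rewrite ln_exp, <- INR_IZR_INZ, Rmult_assoc, <- exp_plus.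
  f_equal. f_equal. ring.
Qed.

Lemma theta_term_neg_exp u n :
  theta_term mu (exp (- Lam * u)) (- Z.of_nat (S n)) * exp (- u * x)
  = - (INR n + 1 - mu / 2) * exp (- beta n * u).
Proof.
  unfold theta_term, Rpower, beta.
  rewrite ln_exp, opp_IZR, <- INR_IZR_INZ, S_INR, Rmult_assoc, <- exp_plus.
  replace (- (INR n + 1) + mu / 2) with (- (INR n + 1 - mu / 2)) by ring. f_equal. f_equal. ring.
Qed.

Lemma theta_integrand_Series u : 0 < u ->
  theta mu (exp (- Lam * u)) * exp (- u * x) = Series (fun n => pair_term n u).
Proof.
  intros Hu. set (q := exp (- Lam * u)).
  assert (Hq : 0 < q < 1)
    by (split; [apply exp_pos | unfold q; rewrite <- exp_0; apply exp_increasing; nra]).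
  assert (Hpos : ex_series (fun n => theta_term mu q (Z.of_nat n))).
  { apply (ex_series_Rabs_le _ _ (fun n => Rabs_theta_term_nonneg_le mu q n ltac:(lra) Hq)).
    apply ex_series_lin_geom, Hq. }
  assert (Hneg : ex_series (fun n => theta_term mu q (- Z.of_nat (S n)))).
  { apply (ex_series_Rabs_le _ _ (fun n => Rabs_theta_term_neg_le mu q n ltac:(lra) Hq)).
    apply ex_series_lin_geom, Hq. }
  unfold theta. rewrite <- Series_plus by auto. rewrite Rmult_comm, <- Series_scal_l.
  apply Series_ext. intros n. unfold q, pair_term.
  rewrite Rmult_plus_distr_l, !(Rmult_comm (exp (- u * x))).
  rewrite theta_term_nonneg_exp, theta_term_neg_exp. ring.
Qed.

Lemma Rabs_pair_term_le a u n : 0 < a <= u ->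
  Rabs (pair_term n u) <= 2 * ((INR n + 1) * exp (- Lam * a) ^ n).
Proof.
  intros Ha. unfold pair_term. rewrite exp_pow. pose proof (pos_INR n).
  assert (Hdecay : forall r, Lam * INR n + x <= r -> exp (- r * u) <= exp (INR n * (- Lam * a))).
  { intros r Hr. apply exp_le_mono.
    assert ((Lam * INR n + x) * u <= r * u) by (apply Rmult_le_compat_r; lra).
    assert (0 <= Lam * INR n * (u - a)) by (apply Rmult_le_pos; [apply Rmult_le_pos|]; lra).
    nra. }
  pose proof (Hdecay _ (alpha_ge n)). pose proof (Hdecay _ (beta_ge n)).
  pose proof (exp_pos (- alpha n * u)). pose proof (exp_pos (- beta n * u)).
  eapply Rle_trans; [apply Rabs_triang|].
  rewrite Rabs_Ropp, !Rabs_mult, !Rabs_right by lra. nra.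
Qed.

Lemma pair_prim_derive n u : is_derive (pair_prim n) u (pair_term n u).
Proof.
  pose proof (alpha_pos n). pose proof (beta_pos n).
  unfold pair_prim, pair_term. auto_derive; [auto|]. field. split; lra.
Qed.

Lemma is_RInt_pair_term n a c : is_RInt (pair_term n) a c (pair_prim n c - pair_prim n a).
Proof.
  apply (is_RInt_derive (pair_prim n) (pair_term n)); [intros; apply pair_prim_derive|].
  intros u _. apply (ex_derive_continuous (K := R_AbsRing) (V := R_NormedModule)).
  unfold pair_term. auto_derive. auto.
Qed.

Lemma pair_prim_0 n :
  pair_prim n 0 = (1 - mu) * (x - Lam * (INR n * INR n + INR n + mu / 2)) / (alpha n * beta n).
Proof.
  pose proof (alpha_pos n). pose proof (beta_pos n).
  unfold pair_prim. rewrite !Rmult_0_r, exp_0. unfold alpha, beta in *. field. lra.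
Qed.

Lemma beta_sub_alpha n : beta n - alpha n = Lam * (2 * INR n + 1) * (1 - mu).
Proof. unfold alpha, beta. ring. Qed.

Lemma Rabs_pair_prim_le n v : 0 <= v ->
  Rabs (pair_prim n v)
  <= Rabs (pair_prim n 0) + (INR n + 1) * (beta n - alpha n) / (alpha n * beta n).
Proof.
  intros Hv. pose proof (alpha_pos n) as Ha. pose proof (beta_pos n) as Hb. pose proof (pos_INR n).
  set (d := beta n - alpha n).
  assert (Hd : 0 <= d) by (unfold d; rewrite beta_sub_alpha; apply Rmult_le_pos; nra).
  set (E := exp (- alpha n * v)). set (B := INR n + 1 - mu / 2).
  assert (HE : 0 < E <= 1)
    by (split; [apply exp_pos | unfold E; rewrite <- exp_0; apply exp_le_mono; nra]).
  assert (Hdecay : 0 <= 1 - exp (- d * v) <= d * v).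
  { pose proof (exp_ineq1_le (- d * v)).
    assert (exp (- d * v) <= 1) by (rewrite <- exp_0; apply exp_le_mono; nra). lra. }
  assert (HEv : E * (alpha n * v) <= 1).
  { unfold E. pose proof (exp_ineq1_le (alpha n * v)). pose proof (exp_pos (alpha n * v)).
    replace (- alpha n * v) with (- (alpha n * v)) by ring. rewrite exp_Ropp.
    apply Rmult_le_reg_r with (exp (alpha n * v)); [lra|]. field_simplify; lra. }
  replace (pair_prim n v) with (E * pair_prim n 0 - B / beta n * (E * (1 - exp (- d * v)))).
  2: { unfold pair_prim, E, B, d. rewrite !Rmult_0_r, exp_0.
       replace (- beta n * v) with (- alpha n * v + - (beta n - alpha n) * v) by ring.
       rewrite exp_plus. field. lra. }
  assert (HB : 0 < B <= INR n + 1) by (unfold B; lra).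
  assert (Hsec : 0 <= E * (1 - exp (- d * v)) <= d / alpha n).
  { split; [apply Rmult_le_pos; lra|].
    apply Rmult_le_reg_r with (alpha n); [lra|].
    replace (d / alpha n * alpha n) with d by (field; lra).
    assert (0 <= E * alpha n) by nra.
    apply Rle_trans with (E * alpha n * (d * v)); [nra|].
    replace (E * alpha n * (d * v)) with (d * (E * (alpha n * v))) by ring. nra. }
  eapply Rle_trans; [apply Rabs_triang|]. rewrite Rabs_Ropp, !Rabs_mult, (Rabs_right E) by lra.
  rewrite (Rabs_right (B / beta n)), (Rabs_right (1 - exp (- d * v)))
    by (apply Rle_ge; try apply Rdiv_le_0_compat; lra).
  apply Rplus_le_compat; [pose proof (Rabs_pos (pair_prim n 0)); nra|].
  apply Rle_trans with (B / beta n * (d / alpha n)).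
  - apply Rmult_le_compat_l; [apply Rdiv_le_0_compat|]; lra.
  - replace (B / beta n * (d / alpha n)) with (B * d / (alpha n * beta n)) by (field; lra).
    unfold Rdiv. apply Rmult_le_compat_r; [apply Rlt_le, Rinv_0_lt_compat; nra|].
    apply Rmult_le_compat_r; lra.
Qed.

Lemma alpha_ge_sq n : Rmin Lam x * (INR n + 1) ^ 2 / 2 <= alpha n.
Proof.
  pose proof (Rmin_l Lam x). pose proof (Rmin_r Lam x). pose proof (pos_INR n).
  assert (Hm : 0 < Rmin Lam x) by (apply Rmin_glb_lt; lra).
  assert (INR n * INR n <= INR n * (INR n + mu)) by nra.
  assert (Rmin Lam x * (INR n * INR n) <= Lam * (INR n * (INR n + mu))) by nra.
  assert (0 <= Rmin Lam x * (INR n - 1) ^ 2) by (apply Rmult_le_pos; [lra | apply pow2_ge_0]).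
  unfold alpha. nra.
Qed.

Lemma beta_ge_sq n : Rmin Lam x * (INR n + 1) ^ 2 / 2 <= beta n.
Proof.
  pose proof (Rmin_l Lam x). pose proof (Rmin_r Lam x). pose proof (pos_INR n).
  assert (Hm : 0 < Rmin Lam x) by (apply Rmin_glb_lt; lra).
  assert (INR n * (INR n + 1) <= (INR n + 1) * (INR n + 1 - mu)) by nra.
  assert (Rmin Lam x * (INR n * (INR n + 1)) <= Lam * ((INR n + 1) * (INR n + 1 - mu))) by nra.
  assert (0 <= Rmin Lam x * (INR n * INR n + 1)) by (apply Rmult_le_pos; nra).
  unfold beta. nra.
Qed.

Lemma alpha_mul_beta_ge n : Rmin Lam x ^ 2 * (INR n + 1) ^ 4 / 4 <= alpha n * beta n.
Proof.
  pose proof (alpha_ge_sq n). pose proof (beta_ge_sq n).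
  assert (0 < Rmin Lam x) by (apply Rmin_glb_lt; lra).
  assert (0 < (INR n + 1) ^ 2) by (apply pow_lt; pose proof (pos_INR n); lra).
  replace (Rmin Lam x ^ 2 * (INR n + 1) ^ 4 / 4)
    with ((Rmin Lam x * (INR n + 1) ^ 2 / 2) * (Rmin Lam x * (INR n + 1) ^ 2 / 2)) by field.
  apply Rmult_le_compat; try lra; apply Rlt_le, Rdiv_lt_0_compat; nra.
Qed.

Lemma Rabs_pair_prim_0_le n :
  Rabs (pair_prim n 0) <= (x + Lam) * (INR n + 1) ^ 2 / (alpha n * beta n).
Proof.
  pose proof (alpha_pos n). pose proof (beta_pos n). pose proof (pos_INR n).
  rewrite pair_prim_0. unfold Rdiv. rewrite Rabs_mult, (Rabs_right (/ _))
    by (apply Rle_ge, Rlt_le, Rinv_0_lt_compat; nra).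
  apply Rmult_le_compat_r; [apply Rlt_le, Rinv_0_lt_compat; nra|].
  rewrite Rabs_mult, Rabs_right by lra.
  apply Rle_trans with (1 * ((x + Lam) * (INR n + 1) ^ 2)); [|lra].
  assert (0 <= Lam * (INR n * INR n + INR n + mu / 2) <= Lam * (INR n + 1) ^ 2) by (split; nra).
  assert (x <= x * (INR n + 1) ^ 2) by nra.
  apply Rmult_le_compat; [lra | apply Rabs_pos | lra | apply Rabs_le; split; lra].
Qed.

Definition pair_prim_bound n := 4 * (x + 3 * Lam) / Rmin Lam x ^ 2 * / (INR n + 1) ^ 2.

Lemma Rabs_pair_prim_le_bound n v : 0 <= v -> Rabs (pair_prim n v) <= pair_prim_bound n.
Proof.
  intros Hv. set (m := Rmin Lam x). set (N1 := INR n + 1).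
  pose proof (alpha_mul_beta_ge n) as Hab. pose proof (Rabs_pair_prim_0_le n) as Hprim0.
  fold m N1 in Hab, Hprim0.
  pose proof (alpha_pos n). pose proof (beta_pos n). pose proof (pos_INR n).
  assert (Hm : 0 < m) by (apply Rmin_glb_lt; lra).
  assert (HN1 : 0 < N1 ^ 2) by (apply pow_lt; unfold N1; lra).
  assert (Hab0 : 0 < alpha n * beta n) by nra.
  assert (Hd : N1 * (beta n - alpha n) <= 2 * Lam * N1 ^ 2).
  { rewrite beta_sub_alpha. unfold N1.
    assert (0 <= Lam * mu * (2 * INR n + 1)) by (apply Rmult_le_pos; nra). nra. }
  eapply Rle_trans; [apply (Rabs_pair_prim_le n v Hv)|]. fold N1.
  apply Rle_trans with ((x + 3 * Lam) * N1 ^ 2 / (alpha n * beta n)).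
  - replace ((x + 3 * Lam) * N1 ^ 2 / (alpha n * beta n))
      with ((x + Lam) * N1 ^ 2 / (alpha n * beta n) + 2 * Lam * N1 ^ 2 / (alpha n * beta n))
      by (field; split; apply Rgt_not_eq; lra).
    apply Rplus_le_compat; [exact Hprim0|].
    unfold Rdiv. apply Rmult_le_compat_r; [apply Rlt_le, Rinv_0_lt_compat|]; lra.
  - unfold pair_prim_bound. fold m N1.
    replace (4 * (x + 3 * Lam) / m ^ 2 * / N1 ^ 2)
      with ((x + 3 * Lam) * N1 ^ 2 / (m ^ 2 * N1 ^ 4 / 4))
      by (field; split; apply Rgt_not_eq; unfold N1 in *; lra).
    unfold Rdiv. apply Rmult_le_compat_l; [nra|].
    apply Rinv_le_contravar; [|exact Hab].
    apply Rdiv_lt_0_compat; [apply Rmult_lt_0_compat; nra | lra].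
Qed.

Lemma ex_series_pair_prim_bound : ex_series pair_prim_bound.
Proof. apply (ex_series_scal_l _ _ ex_series_inv_sq). Qed.

Definition pair_prim_sum u := Series (fun n => pair_prim n u).

Lemma is_RInt_theta_integrand a c : 0 < a < c ->
  is_RInt (fun u => theta mu (exp (- Lam * u)) * exp (- u * x)) a c
    (pair_prim_sum c - pair_prim_sum a).
Proof.
  intros Hac.
  assert (Hex : forall v, 0 <= v -> ex_series (fun n => pair_prim n v))
    by (intros v Hv; exact (ex_series_Rabs_le _ _ (fun n => Rabs_pair_prim_le_bound n v Hv)
                              ex_series_pair_prim_bound)).
  unfold pair_prim_sum. rewrite <- Series_minus by (apply Hex; lra).
  apply (is_RInt_ext (fun u => Series (fun n => pair_term n u))).
  { intros u Hu. rewrite Rmin_left in Hu by lra. symmetry. apply theta_integrand_Series. lra. }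
  apply (is_RInt_Series _ _ (fun n => 2 * ((INR n + 1) * exp (- Lam * a) ^ n))); [lra | | |].
  - intros n. apply is_RInt_pair_term.
  - intros n u Hu. apply Rabs_pair_term_le. lra.
  - apply (ex_series_scal_l 2 (fun n => (INR n + 1) * exp (- Lam * a) ^ n)).
    apply ex_series_lin_geom. split; [apply exp_pos | rewrite <- exp_0; apply exp_increasing; nra].
Qed.

Lemma filterlim_pair_prim_sum_0 :
  filterlim pair_prim_sum (at_right 0) (locally (pair_prim_sum 0)).
Proof.
  apply (filterlim_ext_loc (fun t => Series (fun n => pair_prim n (Rmax 0 t)))).
  { exists (mkposreal 1 Rlt_0_1). intros t _ Ht. unfold pair_prim_sum. rewrite Rmax_right; lra. }
  apply (filterlim_Series_dominated _ _ _ pair_prim_bound); [| |apply ex_series_pair_prim_bound].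
  - intros n. apply (filterlim_ext_loc (pair_prim n)).
    { exists (mkposreal 1 Rlt_0_1). intros t _ Ht. rewrite Rmax_right; lra. }
    apply (filterlim_filter_le_1 (F := locally 0)); [apply filter_le_within|].
    apply (ex_derive_continuous (K := R_AbsRing) (V := R_NormedModule)).
    eexists. apply pair_prim_derive.
  - intros t n. apply Rabs_pair_prim_le_bound, Rmax_l.
Qed.

Lemma filterlim_pair_prim_sum_p_infty :
  filterlim pair_prim_sum (Rbar_locally p_infty) (locally 0).
Proof.
  replace 0 with (Series (fun _ => 0))
    by exact (is_series_unique _ _ (is_series_psum (fun _ => 0) 0)).
  apply (filterlim_ext_loc (fun t => Series (fun n => pair_prim n (Rmax 0 t)))).
  { exists 0. intros t Ht. unfold pair_prim_sum. rewrite Rmax_right; lra. }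
  apply (filterlim_Series_dominated _ _ _ pair_prim_bound); [| |apply ex_series_pair_prim_bound].
  - intros n. apply (filterlim_ext_loc (pair_prim n)).
    { exists 0. intros t Ht. rewrite Rmax_right; lra. }
    pose proof (alpha_pos n). pose proof (beta_pos n).
    replace 0 with (- (INR n + mu / 2) / alpha n * 0 + (INR n + 1 - mu / 2) / beta n * 0) by ring.
    apply (filterlim_ext (fun t => - (INR n + mu / 2) / alpha n * exp (- alpha n * t)
                                    + (INR n + 1 - mu / 2) / beta n * exp (- beta n * t))).
    { intros t. unfold pair_prim. field. split; lra. }
    eapply filterlim_comp_2; [| |exact (filterlim_plus (K := R_AbsRing) (V := R_NormedModule) _ _)];
      (eapply filterlim_comp_2;
         [apply filterlim_const | apply filterlim_exp_neg_mul; lra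
         | exact (filterlim_mult (K := R_AbsRing) _ _)]).
  - intros t n. apply Rabs_pair_prim_le_bound, Rmax_l.
Qed.

(* With [b = mu / 2] and [w = x / Lam - b^2]: [alpha n = Lam ((n + b)^2 + w)] and
   [beta n = Lam ((n + 1 - b)^2 + w)]. *)
Lemma pair_prim_sum_0_value :
  - pair_prim_sum 0
  = / Lam * (PI * sin (PI * mu) / (cos_pi_sqrt (mu ^ 2 - 4 * x / Lam) - cos (PI * mu))).
Proof.
  set (b := mu / 2). set (w := x / Lam - b ^ 2).
  assert (Hb : 0 < b < 1 / 2) by (unfold b; lra).
  assert (Hw : - b ^ 2 < w) by (unfold w; pose proof (Rdiv_lt_0_compat x Lam Hx HLam); lra).
  pose proof (is_series_scal_l (/ Lam) _ _ (is_series_pair_fractions b w Hb Hw)) as Hs.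
  replace (mu ^ 2 - 4 * x / Lam) with (-4 * w) by (unfold w, b; field; lra).
  replace (PI * mu) with (2 * PI * b) by (unfold b; field).
  unfold pair_prim_sum. rewrite <- Series_opp. apply is_series_unique.
  eapply is_series_ext_R; [|exact Hs]. intros n. change (scal (/ Lam) ?t) with (/ Lam * t).
  pose proof (alpha_pos n). pose proof (beta_pos n).
  unfold pair_prim. rewrite !Rmult_0_r, exp_0.
  replace (alpha n) with (Lam * ((INR n + b) ^ 2 + w)) in * by (unfold alpha, w, b; field; lra).
  replace (beta n) with (Lam * ((INR n + 1 - b) ^ 2 + w)) in * by (unfold beta, w, b; field; lra).
  fold b. field. repeat split; apply Rgt_not_eq; nra.
Qed.

End ThetaLaplace.

Theorem mainTheorem14 (mu Lambda x : R) :
  0 < mu < 1 -> 0 < Lambda -> 0 < x ->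
  is_RInt_gen (fun u : R => theta mu (exp (- Lambda * u)) * exp (- u * x))
    (at_right 0) (Rbar_locally p_infty)
    (/ Lambda * (PI * sin (PI * mu)
        / (cos_pi_sqrt (mu ^ 2 - 4 * x / Lambda) - cos (PI * mu)))).
Proof.
  intros Hmu HLam Hx.
  rewrite <- (pair_prim_sum_0_value mu Lambda x Hmu HLam Hx).
  rewrite <- (Rminus_0_l (pair_prim_sum mu Lambda x 0)).
  apply (is_RInt_gen_increments _ (pair_prim_sum mu Lambda x)).
  - intros a c Hac. exact (is_RInt_theta_integrand mu Lambda x Hmu HLam Hx a c Hac).
  - exact (filterlim_pair_prim_sum_0 mu Lambda x Hmu HLam Hx).
  - exact (filterlim_pair_prim_sum_p_infty mu Lambda x Hmu HLam Hx).
Qed.
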